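(* Let $a<b$ be real numbers, let $f:[a,b]\to\mathbb{R}$, and let $c\in\left[a,\frac{a+b}{2}\right]$ be such that: (i) $f(c-x)+f(c+x)=2f(c)$ whenever $c\pm x\in[a,b]$; (ii) the restriction $f|_{[c,b]}$ is convex. Then \[ f(b_\mu)\le\int_a^b f(x)\,d\mu(x) \] for every Borel probability measure $\mu$ on $[a,b]$ whose barycenter $b_\mu=\int_a^b x\,d\mu(x)$ lies in the interval $[2c-a,b]$. Moreover, if in (ii) the restriction $f|_{[c,b]}$ is instead assumed concave (with (i) unchanged), then the reverse inequality $f(b_\mu)\ge\int_a^b f(x)\,d\mu(x)$ holds for every such $\mu$.
   Context: For a Borel probability measure $\mu$ on $[a,b]$, its barycenter is $b_\mu=\int_a^b x\,d\mu(x)$. *)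

From HB Require Import structures.
From mathcomp Require Import all_boot all_order all_algebra.
From mathcomp Require Import all_classical all_reals all_analysis.
Set Implicit Arguments. Unset Strict Implicit. Unset Printing Implicit Defensive.
Import Order.TTheory GRing.Theory Num.Theory.
Local Open Scope classical_set_scope.
Local Open Scope ring_scope.

Definition convex_on (R : realType) (f : R -> R) (c b : R) : Prop :=
  forall x y t : R, c <= x <= b -> c <= y <= b -> 0 <= t <= 1 ->
    f (t * x + (1 - t) * y) <= t * f x + (1 - t) * f y.

Definition concave_on (R : realType) (f : R -> R) (c b : R) : Prop :=
  forall x y t : R, c <= x <= b -> c <= y <= b -> 0 <= t <= 1 ->
    t * f x + (1 - t) * f y <= f (t * x + (1 - t) * y).

Definition point_symmetric (R : realType) (f : R -> R) (a b c : R) : Prop :=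
  forall x : R, a <= c - x <= b -> a <= c + x <= b ->
    f (c - x) + f (c + x) = 2 * f c.

Definition barycenter (R : realType) (mu : probability R R) (a b : R) : R :=
  fine (\int[mu]_(x in `[a, b]) (x%:E))%E.

From HB Require Import structures.
From mathcomp Require Import all_boot all_order all_algebra.
From mathcomp Require Import all_classical all_reals all_analysis.
From mathcomp Require Import measurable_realfun.
From mathcomp Require Import ring lra.
Import Order.TTheory GRing.Theory Num.Theory.
Local Open Scope classical_set_scope.
Local Open Scope ring_scope.

(* Jensen's inequality holds as soon as [f] has a supporting line at the
   barycenter [p]. For [p] strictly inside [[a, b]], convexity on [[c, b]] gives
   a supporting line there (the supremum of the left chord slopes at [p]), and
   since [p >= 2 c - a] the symmetry of [f] about [(c, f c)] reflects [[a, c]]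
   into [[c, p]], where the chord of [f] supplies the missing bound. For [p] an
   endpoint, [mu] is the Dirac mass at [p] and equality holds. The concave case
   is the convex one for [- f]. *)

(* The integral is defined for every extended-real function, measurable or
   not, through suprema over simple functions below its positive and negative
   parts; it is monotone in that generality. *)
Lemma le_integral_pointwise d (T : measurableType d) (R : realType)
  (mu : {measure set T -> \bar R}) (D : set T) (f g : T -> \bar R) :
  (forall x, D x -> (f x <= g x)%E) ->
  (\int[mu]_(x in D) f x <= \int[mu]_(x in D) g x)%E.
Proof.
move=> fg; rewrite /integral; apply: leeB.
  apply: ereal_sup_le => _ [h hf <-]; exists h => //= x.
  apply: (le_trans (hf x)); apply: (@funepos_le _ _ setT); last by rewrite in_setT.
  by move=> y _; rewrite /patch; case: ifP => // /set_mem /fg.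
apply: ereal_sup_le => _ [h hf <-]; exists h => //= x.
apply: (le_trans (hf x)); apply: (@funeneg_le _ _ setT); last by rewrite in_setT.
by move=> y _; rewrite /patch; case: ifP => // /set_mem /fg.
Qed.

Section probability_on_segment.
Context {R : realType} {a b : R} {mu : probability R R}.
Hypothesis mu_ab : mu [set` `[a, b]] = 1%E.

Local Notation p := (barycenter mu a b).

Let measurable_ab : measurable [set` `[a, b]]. Proof. exact: measurable_itv. Qed.

Let finite_mu_ab : (mu [set` `[a, b]] < +oo)%E.
Proof. by rewrite mu_ab ltry. Qed.

Let integrable_id : mu.-integrable [set` `[a, b]] (EFin \o id).
Proof.
apply: measurable_bounded_integrable finite_mu_ab _ _ => //.
exact: (compact_bounded (@segment_compact R a b)).
Qed.

Let integrable_cst (r : R) : mu.-integrable [set` `[a, b]] (fun _ => r%:E).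
Proof.
apply: (measurable_bounded_integrable (f := cst r)) finite_mu_ab _ _ => //.
exact: bounded_cst.
Qed.

Lemma integral_affine (al k q : R) :
  (\int[mu]_(x in `[a, b]) (al + k * (x - q))%:E)%E = (al + k * (p - q))%:E.
Proof.
transitivity (\int[mu]_(x in `[a, b])
    ((fun _ => (al - k * q)%:E) x + k%:E * (EFin \o id) x))%E.
  by apply: eq_integral => x _ /=; rewrite -EFinM -EFinD; congr EFin; ring.
rewrite integralD //; last exact: integrableZl.
rewrite integralZl // integral_cst // [X in (_ * X)%E]mu_ab mule1.
rewrite [X in (_ * X)%E](_ : _ = p%:E); last first.
  by rewrite /barycenter fineK // (integrable_fin_num measurable_ab integrable_id).
by rewrite -EFinM -EFinD; congr EFin; ring.
Qed.

Lemma barycenter_itv : a <= p <= b.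
Proof.
have ge0_affine al k : (forall x, a <= x <= b -> 0 <= al + k * (x - a)) ->
    0 <= al + k * (p - a).
  move=> ge0; rewrite -lee_fin -integral_affine; apply: integral_ge0 => x.
  by rewrite /= in_itv /= => /ge0; rewrite lee_fin.
apply/andP; split; rewrite -subr_ge0.
- rewrite -[p - a]mul1r -[1 * _]add0r.
  by apply: ge0_affine => x /andP[ax _]; lra.
- rewrite (_ : b - p = b - a + -1 * (p - a)); last by ring.
  by apply: ge0_affine => x /andP[_ xb]; lra.
Qed.

(* If [x - e] has constant sign on [a, b] and integrates to [0], then [mu] is
   the Dirac mass at [e], so a function that is finite only at [e] integrates
   to its value there. *)
Let integral_at_extreme_barycenter (e s r : R) (v : \bar R) :
  p = e -> s != 0 -> (forall x, a <= x <= b -> 0 <= s * (x - e)) ->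
  (\int[mu]_(x in `[a, b]) (if x == e then r%:E else v))%E = r%:E.
Proof.
move=> pe s0 hs.
have mg : measurable_fun [set` `[a, b]] (EFin \o (fun x : R => s * (x - e))).
  apply/measurable_EFinP; apply: measurable_funM => //.
  exact: measurable_funB.
have : (\int[mu]_(x in `[a, b]) `|(s * (x - e))%:E|)%E = 0%E.
  transitivity (\int[mu]_(x in `[a, b]) (0 + s * (x - e))%:E)%E.
    apply: eq_integral => x /[1!inE] /= /[1!in_itv] /= xab.
    by rewrite add0r ger0_norm // hs.
  by rewrite integral_affine pe subrr mulr0 addr0.
move=> /(ae_eq_integral_abs mu measurable_ab mg) mu_e.
rewrite (ae_eq_integral (cst r%:E)) //.
- by rewrite integral_cst // [X in (_ * X)%E]mu_ab mule1.
- by apply: measurable_fun_if => //; exact: measurable_fun_eqr.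
move: mu_e; apply: filterS => x /= + xab => /(_ xab) /eqP.
by rewrite eqe mulf_eq0 (negbTE s0) subr_eq0 => /eqP ->; rewrite eqxx.
Qed.

Lemma integral_barycenter_endpoint (f : R -> R) : p = a \/ p = b ->
  (\int[mu]_(x in `[a, b]) (f x)%:E)%E = (f p)%:E.
Proof.
have extreme e s : p = e -> s != 0 ->
    (forall x, a <= x <= b -> 0 <= s * (x - e)) ->
    (\int[mu]_(x in `[a, b]) (f x)%:E)%E = (f p)%:E.
  move=> pe s0 hs; apply/le_anti/andP; split.
    rewrite -(@integral_at_extreme_barycenter e s (f p) +oo%E) //.
    by apply: le_integral_pointwise => x _; case: eqP => [->|_]; rewrite -?pe ?leey.
  rewrite -(@integral_at_extreme_barycenter e s (f p) -oo%E) //.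
  by apply: le_integral_pointwise => x _; case: eqP => [->|_]; rewrite -?pe ?leNye.
case=> pe.
- by apply: (extreme a 1) => // x /andP[ax _]; rewrite mul1r subr_ge0.
- apply: (extreme b (-1)); rewrite ?oppr_eq0 ?oner_eq0 // => x /andP[_ xb].
  by rewrite mulN1r oppr_ge0 subr_le0.
Qed.

Let barycenter_interior : p != a -> p != b -> a < p < b.
Proof.
by move=> pa pb; move: barycenter_itv; rewrite !le_eqVlt eq_sym (negbTE pa) (negbTE pb).
Qed.

Lemma jensen_le_of_supporting_line (f : R -> R) :
  (a < p < b -> exists k, forall x, a <= x <= b -> f p + k * (x - p) <= f x) ->
  ((f p)%:E <= \int[mu]_(x in `[a, b]) (f x)%:E)%E.
Proof.
move=> supp.
have [pa|pa] := eqVneq p a; first by rewrite integral_barycenter_endpoint; [|left].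
have [pb|pb] := eqVneq p b; first by rewrite integral_barycenter_endpoint; [|right].
have [k hk] := supp (barycenter_interior pa pb).
rewrite -[X in (X%:E <= _)%E]addr0 -(mulr0 k) -(subrr p) -integral_affine.
by apply: le_integral_pointwise => x /=; rewrite in_itv /= lee_fin; apply: hk.
Qed.

Lemma jensen_ge_of_supporting_line (f : R -> R) :
  (a < p < b -> exists k, forall x, a <= x <= b -> f x <= f p + k * (x - p)) ->
  (\int[mu]_(x in `[a, b]) (f x)%:E <= (f p)%:E)%E.
Proof.
move=> supp.
have [pa|pa] := eqVneq p a; first by rewrite integral_barycenter_endpoint; [|left].
have [pb|pb] := eqVneq p b; first by rewrite integral_barycenter_endpoint; [|right].
have [k hk] := supp (barycenter_interior pa pb).
rewrite -[X in (_ <= X%:E)%E]addr0 -(mulr0 k) -(subrr p) -integral_affine.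
by apply: le_integral_pointwise => x /=; rewrite in_itv /= lee_fin; apply: hk.
Qed.

End probability_on_segment.

Section convex_on_segment.
Context {R : realType} {f : R -> R} {c b : R}.
Hypothesis f_convex : convex_on f c b.

Lemma convex_on_chord {u v w} : c <= u -> w <= b -> u < w -> u <= v <= w ->
  (w - u) * f v <= (w - v) * f u + (v - u) * f w.
Proof.
move=> cu wb uw /andP[uv vw].
have wu0 : w - u != 0 by rewrite subr_eq0 gt_eqF.
set t := (w - v) / (w - u).
have vE : v = t * u + (1 - t) * w by rewrite /t; field.
have t01 : 0 <= t <= 1.
  apply/andP; split; first by apply: divr_ge0; rewrite subr_ge0 // ltW.
  by rewrite ler_pdivrMr ?subr_gt0 // mul1r; lra.
have cub : c <= u <= b by apply/andP; split; lra.
have cwb : c <= w <= b by apply/andP; split; lra.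
have := @f_convex u w t cub cwb t01; rewrite -vE => /(ler_wpM2l (_ : 0 <= w - u)).
by rewrite subr_ge0 ltW // => /(_ isT); congr (_ <= _); rewrite /t; field.
Qed.

Lemma convex_on_slope_le y q z : c <= y -> z <= b -> y < q < z ->
  (f q - f y) / (q - y) <= (f z - f q) / (z - q).
Proof.
move=> cy zb /andP[yq qz].
have yqz : y <= q <= z by rewrite !ltW.
have := convex_on_chord cy zb (lt_trans yq qz) yqz.
rewrite ler_pdivrMr ?subr_gt0 // mulrAC ler_pdivlMr ?subr_gt0 //; nra.
Qed.

Lemma convex_on_supporting_line q : c < q < b ->
  exists k, forall y, c <= y <= b -> f q + k * (y - q) <= f y.
Proof.
move=> /andP[cq qb].
pose S := [set (f q - f y) / (q - y) | y in [set y | c <= y < q]].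
have S0 : S !=set0 by exists ((f q - f c) / (q - c)), c; rewrite //= lexx cq.
have S_ub z : q < z -> z <= b -> ubound S ((f z - f q) / (z - q)).
  move=> qz zb _ [y /= /andP[cy yq] <-].
  by apply: convex_on_slope_le; rewrite ?yq.
have S_sup : has_sup S by split=> //; exists ((f b - f q) / (b - q)); exact: S_ub.
exists (sup S) => y /andP[cy yb]; have [yq|qy|->] := ltgtP y q; last by lra.
- have : (f q - f y) / (q - y) <= sup S.
    by apply: sup_ubound; [case: S_sup | exists y; rewrite //= cy yq].
  by rewrite ler_pdivrMr ?subr_gt0 //; lra.
- have := ge_sup S0 (S_ub y qy yb).
  by rewrite ler_pdivlMr ?subr_gt0 //; lra.
Qed.

End convex_on_segment.

(* Left of [c], [f x = 2 f c - f (2 c - x)] with [c < 2 c - x <= p]; the chord of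
   [f] over [[c, p]] bounds [f (2 c - x)] from above, and the supporting line at
   [p] bounds [f c] from below. *)
Lemma point_symmetric_convex_supporting_line {R : realType} {f : R -> R}
    {a b c p : R} :
  point_symmetric f a b c -> convex_on f c b -> 2 * c - a <= p -> a < p < b ->
  exists k, forall x, a <= x <= b -> f p + k * (x - p) <= f x.
Proof.
move=> f_sym f_convex cap /andP[ap pb].
have cp : c < p by lra.
have /(convex_on_supporting_line f_convex) [k hk] : c < p < b by rewrite cp.
exists k => x /andP[ax xb]; have [cx|xc] := leP c x; first by rewrite hk ?cx.
set y := 2 * c - x.
have cy : c < y by rewrite /y; lra.
have yp : y <= p by rewrite /y; lra.
have fx : f x = 2 * f c - f y.
  move: (f_sym (c - x)); rewrite subKr (_ : c + (c - x) = y); last by rewrite /y; ring.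
  rewrite ax xb => /(_ isT) sym.
  suff : f x + f y = 2 * f c by lra.
  by apply: sym; apply/andP; split; rewrite /y; lra.
have cyp : c <= y <= p by rewrite (ltW cy) yp.
have chord := convex_on_chord f_convex (lexx c) (ltW pb) cp cyp.
have ccb : c <= c <= b by rewrite lexx (ltW (lt_trans cp pb)).
have fc := hk c ccb.
rewrite fx -(ler_pM2l (_ : 0 < p - c)) ?subr_gt0 //.
have : (p + y - 2 * c) * (f p + k * (c - p)) <= (p + y - 2 * c) * f c.
  by apply: ler_wpM2l => //; rewrite /y; lra.
rewrite /y in chord * => ?; nra.
Qed.

Lemma point_symmetric_concave_supporting_line {R : realType} {f : R -> R}
    {a b c p : R} :
  point_symmetric f a b c -> concave_on f c b -> 2 * c - a <= p -> a < p < b ->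
  exists k, forall x, a <= x <= b -> f x <= f p + k * (x - p).
Proof.
move=> f_sym f_concave cap pab.
have Nf_sym : point_symmetric (fun x => - f x) a b c.
  by move=> x h1 h2; have := f_sym x h1 h2; lra.
have Nf_convex : convex_on (fun x => - f x) c b.
  by move=> x y t hx hy ht; have := f_concave x y t hx hy ht; lra.
have [k hk] := point_symmetric_convex_supporting_line Nf_sym Nf_convex cap pab.
by exists (- k) => x /hk; lra.
Qed.

Theorem theorem1 (R : realType) (a b c : R) (f : R -> R) :
  a < b -> a <= c <= (a + b) / 2 ->
  point_symmetric f a b c ->
  (convex_on f c b ->
     forall mu : probability R R, mu [set` `[a, b]] = 1%E ->
       2 * c - a <= barycenter mu a b <= b ->
       ((f (barycenter mu a b))%:E <= \int[mu]_(x in `[a, b]) (f x)%:E)%E) /\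
  (concave_on f c b ->
     forall mu : probability R R, mu [set` `[a, b]] = 1%E ->
       2 * c - a <= barycenter mu a b <= b ->
       (\int[mu]_(x in `[a, b]) (f x)%:E <= (f (barycenter mu a b))%:E)%E).
Proof.
move=> _ _ f_sym; split=> f_shape mu mu_ab /andP[cap _].
- apply: (jensen_le_of_supporting_line mu_ab) => pab.
  exact: point_symmetric_convex_supporting_line f_sym f_shape cap pab.
- apply: (jensen_ge_of_supporting_line mu_ab) => pab.
  exact: point_symmetric_concave_supporting_line f_sym f_shape cap pab.
Qed.
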